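(* Let $T>0$, $\lambda>0$, let $\theta:[0,T]\to(0,\infty)$ be continuous, $g_t=\sqrt{2\lambda^2\theta_t}$, $\bar\theta_T=\int_0^T\theta_zdz$, $\gamma\in(0,\infty)$, and $x_0,x_T\in\mathbb{R}^d$. Consider the problem of minimizing $\int_0^T\frac12\|\mathbf{u}_t\|_2^2dt+\frac\gamma2\|\mathbf{x}^u_T-x_T\|_2^2$ over controls $\mathbf{u}:[0,T]\to\mathbb{R}^d$, subject to $\frac{d\mathbf{x}_t}{dt}=\theta_t(x_T-\mathbf{x}_t)+g_t\mathbf{u}_t$, $\mathbf{x}^u_0=x_0$. Then the terminal state $\mathbf{x}^u_T$ of the optimally controlled trajectory satisfies $$\|\mathbf{x}^u_T-x_T\|_2^2=\frac{e^{-2\bar\theta_T}}{\big(1+\gamma\lambda^2(1-e^{-2\bar\theta_T})\big)^2}\,\|x_T-x_0\|_2^2 .$$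
   Context: This is the optimal control problem associated with the generalized Ornstein–Uhlenbeck process $d\mathbf{x}_t=\theta_t(\boldsymbol{\mu}-\mathbf{x}_t)dt+g_td\mathbf{w}_t$ with mean $\boldsymbol{\mu}=x_T$ and $g_t^2=2\lambda^2\theta_t$. *)

From Stdlib Require Import Reals List.
From Coquelicot Require Import Coquelicot.
Open Scope R_scope.

(* Vectors of R^d are represented as functions nat -> R; only the
   coordinates 0 .. d-1 are meaningful. *)
Definition vec := nat -> R.

Definition sqnorm (d : nat) (v : vec) : R :=
  fold_right Rplus 0 (map (fun i => v i ^ 2) (seq 0 d)).

Definition vsub (v w : vec) : vec := fun i => v i - w i.

Definition cont_on (f : R -> R) (a b : R) : Prop :=
  forall t, a <= t <= b ->
    filterlim f (within (fun s => a <= s <= b) (locally t)) (locally (f t)).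

Definition admissible (d : nat) (T : R) (u : R -> vec) : Prop :=
  forall i, (i < d)%nat -> cont_on (fun t => u t i) 0 T.

Definition gfun (lam : R) (theta : R -> R) (t : R) : R :=
  sqrt (2 * lam ^ 2 * theta t).

Definition is_state (d : nat) (T lam : R) (theta : R -> R) (x0 xT : vec)
  (u : R -> vec) (x : R -> vec) : Prop :=
  forall i, (i < d)%nat ->
    x 0 i = x0 i /\
    cont_on (fun t => x t i) 0 T /\
    (forall t, 0 < t < T ->
       is_derive (fun s => x s i) t
         (theta t * (xT i - x t i) + gfun lam theta t * u t i)).

Definition cost (d : nat) (T gam : R) (xT : vec) (u : R -> vec) (x : R -> vec) : R :=
  RInt (fun t => / 2 * sqnorm d (u t)) 0 T + gam / 2 * sqnorm d (vsub (x T) xT).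

Definition optimal (d : nat) (T lam gam : R) (theta : R -> R) (x0 xT : vec)
  (u : R -> vec) (x : R -> vec) : Prop :=
  admissible d T u /\ is_state d T lam theta x0 xT u x /\
  forall v y, admissible d T v -> is_state d T lam theta x0 xT v y ->
    cost d T gam xT u x <= cost d T gam xT v y.

From Stdlib Require Import Reals List Lra Lia.
From Coquelicot Require Import Coquelicot.
Open Scope R_scope.

(* With Θ_t = ∫_0^t θ and k_s = e^(Θ_s - Θ_T) g_s, variation of constants gives,
   coordinatewise, x_T - xT = a + ∫_0^T k u for every admissible control u, where
   a = e^(-Θ_T) (x0 - xT); and K := ∫_0^T k² = λ² (1 - e^(-2 Θ_T)), because k_s² is
   the derivative of λ² e^(2 (Θ_s - Θ_T)).  The cost is thus a sum over coordinates of
   ½ ∫ u² + γ/2 (a + ∫ k u)².  Expanding 0 <= ∫ (u + c k)² with c = γ a / (1 + γ K)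
   bounds each term below by γ a² / (2 (1 + γ K)) + γ/2 (∫ k u + c K)², and u = -c k
   attains the bound.  An optimal control therefore has ∫ k u = -c K, i.e. terminal
   gap a / (1 + γ K), whose squared norm is the claimed formula. *)

Definition lsum {A : Type} (l : list A) (f : A -> R) : R :=
  fold_right Rplus 0 (map f l).

Lemma lsum_ext {A : Type} (l : list A) (f g : A -> R) :
  (forall i, In i l -> f i = g i) -> lsum l f = lsum l g.
Proof. intros H; unfold lsum; f_equal; now apply map_ext_in. Qed.

Lemma lsum_plus {A : Type} (l : list A) (f g : A -> R) :
  lsum l (fun i => f i + g i) = lsum l f + lsum l g.
Proof. induction l as [|a l IH]; unfold lsum in *; simpl; [ring | rewrite IH; ring]. Qed.

Lemma lsum_scal {A : Type} (l : list A) (c : R) (f : A -> R) :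
  lsum l (fun i => c * f i) = c * lsum l f.
Proof. induction l as [|a l IH]; unfold lsum in *; simpl; [ring | rewrite IH; ring]. Qed.

Lemma lsum_le {A : Type} (l : list A) (f g : A -> R) :
  (forall i, In i l -> f i <= g i) -> lsum l f <= lsum l g.
Proof.
  induction l as [|a l IH]; intros H; unfold lsum in *; simpl; [lra|].
  apply Rplus_le_compat; auto with datatypes.
Qed.

Lemma lsum_ge0 {A : Type} (l : list A) (f : A -> R) :
  (forall i, In i l -> 0 <= f i) -> 0 <= lsum l f.
Proof.
  induction l as [|a l IH]; intros H; unfold lsum in *; simpl; [lra|].
  apply Rplus_le_le_0_compat; auto with datatypes.
Qed.

Lemma lsum_ge0_eq0 {A : Type} (l : list A) (f : A -> R) :
  (forall i, In i l -> 0 <= f i) -> lsum l f <= 0 -> forall i, In i l -> f i = 0.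
Proof.
  induction l as [|a l IH]; intros Hf Hs i Hi; [destruct Hi|].
  assert (Ha : 0 <= f a) by auto with datatypes.
  assert (Hl : 0 <= lsum l f) by (apply lsum_ge0; auto with datatypes).
  change (f a + lsum l f <= 0) in Hs.
  destruct Hi as [<- | Hi]; [lra | apply IH; auto with datatypes; lra].
Qed.

Lemma continuous_Rmult (f g : R -> R) (t : R) :
  continuous f t -> continuous g t -> continuous (fun s => f s * g s) t.
Proof. exact (continuous_mult f g t). Qed.

Lemma continuous_cont_on (f : R -> R) (a b : R) :
  (forall t, a <= t <= b -> continuous f t) -> cont_on f a b.
Proof. intros Hf t Ht; eapply filterlim_filter_le_1; [apply filter_le_within | now apply Hf]. Qed.

Lemma cont_on_mult (f g : R -> R) (a b : R) :
  cont_on f a b -> cont_on g a b -> cont_on (fun t => f t * g t) a b.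
Proof.
  intros Hf Hg t Ht.
  eapply (filterlim_comp_2 f g Rmult); [apply Hf, Ht | apply Hg, Ht |].
  exact (filterlim_mult (K := R_AbsRing) (f t) (g t)).
Qed.

Lemma cont_on_minus (f g : R -> R) (a b : R) :
  cont_on f a b -> cont_on g a b -> cont_on (fun t => f t - g t) a b.
Proof.
  intros Hf Hg t Ht.
  eapply (filterlim_comp_2 f (fun s => opp (g s)) plus); [apply Hf, Ht | |].
  - eapply (filterlim_comp _ _ _ g opp); [apply Hg, Ht | exact (filterlim_opp (V := R_NormedModule) (g t))].
  - exact (filterlim_plus (V := R_NormedModule) (f t) (opp (g t))).
Qed.

Lemma cont_on_pow2 (f : R -> R) (a b : R) :
  cont_on f a b -> cont_on (fun t => f t ^ 2) a b.
Proof.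
  intros Hf t Ht.
  apply (filterlim_ext (fun s => f s * f s)); [intros s; ring|].
  replace (f t ^ 2) with (f t * f t) by ring. now apply cont_on_mult.
Qed.

Definition clamp (a b t : R) : R := Rmax a (Rmin b t).

Lemma clamp_in (a b t : R) : a <= b -> a <= clamp a b t <= b.
Proof. intros; unfold clamp, Rmax, Rmin; repeat destruct Rle_dec; lra. Qed.

Lemma clamp_id (a b t : R) : a <= t <= b -> clamp a b t = t.
Proof. intros; unfold clamp, Rmax, Rmin; repeat destruct Rle_dec; lra. Qed.

Lemma clamp_lipschitz (a b s t : R) : Rabs (clamp a b s - clamp a b t) <= Rabs (s - t).
Proof.
  unfold clamp, Rmax, Rmin, Rabs; repeat destruct Rle_dec; repeat destruct Rcase_abs; lra.
Qed.

Lemma cont_on_clamp (f : R -> R) (a b t : R) :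
  a <= b -> cont_on f a b -> continuous (fun s => f (clamp a b s)) t.
Proof.
  intros Hab Hf.
  apply (filterlim_comp _ _ _ (clamp a b) f _
           (within (fun s => a <= s <= b) (locally (clamp a b t)))); [|now apply Hf, clamp_in].
  intros P [eps HP]; exists eps; intros s Hs.
  apply HP; [|now apply clamp_in].
  change (Rabs (clamp a b s - clamp a b t) < eps).
  change (Rabs (s - t) < eps) in Hs.
  eapply Rle_lt_trans; [apply clamp_lipschitz | exact Hs].
Qed.

Lemma ex_RInt_cont_on (f : R -> R) (a b : R) : a <= b -> cont_on f a b -> ex_RInt f a b.
Proof.
  intros Hab Hf.
  apply (ex_RInt_ext (fun s => f (clamp a b s))).
  - intros t Ht; rewrite Rmin_left, Rmax_right in Ht by lra.
    now rewrite clamp_id by lra.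
  - apply (ex_RInt_continuous (V := R_CompleteNormedModule)); intros t _; now apply cont_on_clamp.
Qed.

Lemma cont_on_derive_0 (h : R -> R) (a b : R) :
  a <= b -> cont_on h a b -> (forall t, a < t < b -> is_derive h t 0) -> h b = h a.
Proof.
  intros Hab Hc Hd.
  destruct (MVT_gen (fun s => h (clamp a b s)) a b (fun _ => 0)) as [c [_ Hmvt]];
    rewrite ?Rmin_left, ?Rmax_right by lra.
  - intros t Ht. apply (is_derive_ext_loc h); [|now apply Hd].
    apply (locally_interval _ t a b); [apply Ht | apply Ht|].
    intros s Has Hsb; simpl in Has, Hsb; now rewrite clamp_id by lra.
  - intros t _; apply continuity_pt_filterlim; now apply cont_on_clamp.
  - rewrite !clamp_id in Hmvt by lra. lra.
Qed.

Lemma RInt_upper_derive (f : R -> R) (a t : R) :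
  (forall s, continuous f s) -> is_derive (fun u => RInt f a u) t (f t).
Proof.
  intros Hf; apply (is_derive_RInt f _ a); [|apply Hf].
  apply filter_forall; intros u.
  apply (RInt_correct (V := R_CompleteNormedModule)), ex_RInt_continuous; auto.
Qed.

Lemma is_RInt_lsum {A : Type} (l : list A) (f : A -> R -> R) (a b : R) :
  (forall i, In i l -> ex_RInt (f i) a b) ->
  is_RInt (fun t => lsum l (fun i => f i t)) a b (lsum l (fun i => RInt (f i) a b)).
Proof.
  induction l as [|j l IH]; intros H; unfold lsum in *; simpl.
  - assert (H0 := is_RInt_const (V := R_NormedModule) a b 0).
    replace (scal (b - a) (0 : R_NormedModule)) with 0 in H0 by (symmetry; apply Rmult_0_r).
    exact H0.
  - apply (is_RInt_plus (V := R_NormedModule)); [apply (RInt_correct (V := R_CompleteNormedModule))|apply IH]; auto with datatypes.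
Qed.

Lemma RInt_quadratic_ge0 (f k : R -> R) (a b c : R) :
  a <= b -> cont_on f a b -> cont_on k a b ->
  0 <= RInt (fun s => f s ^ 2) a b + 2 * c * RInt (fun s => k s * f s) a b
       + c ^ 2 * RInt (fun s => k s ^ 2) a b.
Proof.
  intros Hab Hf Hk.
  assert (Hsum : is_RInt (fun s => f s ^ 2 + (2 * c * (k s * f s) + c ^ 2 * k s ^ 2)) a b
    (RInt (fun s => f s ^ 2) a b + (2 * c * RInt (fun s => k s * f s) a b
       + c ^ 2 * RInt (fun s => k s ^ 2) a b))).
  { apply (is_RInt_plus (V := R_NormedModule));
      [|apply (is_RInt_plus (V := R_NormedModule));
          apply (is_RInt_scal (V := R_NormedModule) (fun s => _))];
      apply (RInt_correct (V := R_CompleteNormedModule)), ex_RInt_cont_on; auto using cont_on_pow2, cont_on_mult. }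
  rewrite Rplus_assoc, <- (is_RInt_unique _ _ _ _ Hsum).
  apply RInt_ge_0; [exact Hab | eexists; exact Hsum |].
  intros s _.
  replace (f s ^ 2 + (2 * c * (k s * f s) + c ^ 2 * k s ^ 2)) with ((f s + c * k s) ^ 2) by ring.
  apply pow2_ge_0.
Qed.

(* [auto_derive] leaves equations typed in the carrier of [R_NormedModule] and with
   [x - y] unfolded to [x + - y], also under [exp]; [ring] needs both normalised. *)
Ltac ring_R := match goal with |- ?a = ?b => change (@eq R a b); unfold Rminus; ring end.

Section BridgeControl.

Variables (T lam gam : R) (theta : R -> R) (x0 xT : vec) (d : nat).
Hypothesis HT : 0 < T.
Hypothesis Hgam : 0 < gam.
Hypothesis theta_pos : forall t, 0 <= t <= T -> 0 < theta t.
Hypothesis theta_cont : cont_on theta 0 T.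

(* θ is frozen outside [0, T], so that Θ is differentiable and the kernel is
   continuous on all of R, as Coquelicot's calculus lemmas require. *)
Definition theta_ext (t : R) : R := theta (clamp 0 T t).
Definition Theta (t : R) : R := RInt theta_ext 0 t.
Definition kernel (s : R) : R := exp (Theta s - Theta T) * gfun lam theta_ext s.
Definition Kint : R := RInt (fun s => kernel s ^ 2) 0 T.
Definition energy (v : R -> vec) (i : nat) : R := RInt (fun s => v s i ^ 2) 0 T.
Definition response (v : R -> vec) (i : nat) : R := RInt (fun s => kernel s * v s i) 0 T.
Definition free_gap (i : nat) : R := exp (- Theta T) * (x0 i - xT i).
Definition opt_gap (i : nat) : R := free_gap i / (1 + gam * Kint).
Definition uopt (t : R) : vec := fun i => - (gam * opt_gap i) * kernel t.
Definition xopt (t : R) : vec := fun i =>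
  xT i + exp (- Theta t) * (x0 i - xT i)
  + exp (Theta T - Theta t) * RInt (fun s => kernel s * uopt s i) 0 t.

Lemma theta_ext_continuous (t : R) : continuous theta_ext t.
Proof. apply cont_on_clamp; [lra | exact theta_cont]. Qed.

Lemma theta_ext_pos (t : R) : 0 < theta_ext t.
Proof. apply theta_pos, clamp_in; lra. Qed.

Lemma theta_ext_id (t : R) : 0 <= t <= T -> theta_ext t = theta t.
Proof. intros Ht; unfold theta_ext; now rewrite clamp_id. Qed.

Lemma Theta_derive (t : R) : is_derive Theta t (theta_ext t).
Proof. apply RInt_upper_derive, theta_ext_continuous. Qed.

Lemma Derive_Theta (t : R) : Derive Theta t = theta_ext t.
Proof. apply is_derive_unique, Theta_derive. Qed.

Lemma ex_derive_Theta (t : R) : ex_derive Theta t.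
Proof. eexists; apply Theta_derive. Qed.

Lemma Theta_0 : Theta 0 = 0.
Proof. exact (RInt_point (V := R_CompleteNormedModule) 0 theta_ext). Qed.

Lemma Theta_T : Theta T = RInt theta 0 T.
Proof.
  apply RInt_ext; intros t Ht; rewrite Rmin_left, Rmax_right in Ht by lra.
  apply theta_ext_id; lra.
Qed.

Lemma exp_Theta_continuous (t : R) : continuous (fun s => exp (Theta s - Theta T)) t.
Proof.
  apply continuous_exp_comp, (ex_derive_continuous (fun s => Theta s - Theta T)).
  auto_derive; auto using ex_derive_Theta.
Qed.

Lemma kernel_continuous (t : R) : continuous kernel t.
Proof.
  apply continuous_Rmult.
  - apply exp_Theta_continuous.
  - apply continuous_sqrt_comp, continuous_Rmult;
      [apply continuous_const | apply theta_ext_continuous].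
Qed.

Lemma kernel_sq (s : R) :
  kernel s ^ 2 = 2 * lam ^ 2 * theta_ext s * exp (2 * (Theta s - Theta T)).
Proof.
  unfold kernel, gfun.
  rewrite Rpow_mult_distr, pow2_sqrt by (generalize (theta_ext_pos s) (pow2_ge_0 lam); nra).
  replace (2 * (Theta s - Theta T)) with ((Theta s - Theta T) + (Theta s - Theta T)) by ring.
  rewrite exp_plus; ring.
Qed.

Lemma Kint_eq : Kint = lam ^ 2 * (1 - exp (-2 * Theta T)).
Proof.
  apply is_RInt_unique.
  replace (lam ^ 2 * (1 - exp (-2 * Theta T)))
    with (lam ^ 2 * exp (2 * (Theta T - Theta T)) - lam ^ 2 * exp (2 * (Theta 0 - Theta T))).
  - apply (is_RInt_derive (fun s => lam ^ 2 * exp (2 * (Theta s - Theta T)))).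
    + intros t _. auto_derive; [apply ex_derive_Theta|].
      rewrite Derive_Theta, kernel_sq; ring_R.
    + intros t _. apply (continuous_ext (fun s => kernel s * kernel s)); [intros s; ring_R|].
      apply continuous_Rmult; apply kernel_continuous.
  - rewrite Theta_0, Rminus_diag, Rmult_0_r, exp_0.
    replace (2 * (0 - Theta T)) with (-2 * Theta T) by ring; ring.
Qed.

Lemma Kint_ge0 : 0 <= Kint.
Proof.
  apply RInt_ge_0; [lra | |intros; apply pow2_ge_0].
  apply ex_RInt_cont_on; [lra|].
  apply cont_on_pow2, continuous_cont_on; intros; apply kernel_continuous.
Qed.

Lemma opt_gap_spec (i : nat) : free_gap i = opt_gap i * (1 + gam * Kint).
Proof. unfold opt_gap; field; generalize Kint_ge0; nra. Qed.

Lemma terminal_gap (v y : R -> vec) (i : nat) :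
  admissible d T v -> is_state d T lam theta x0 xT v y -> (i < d)%nat ->
  y T i - xT i = free_gap i + response v i.
Proof.
  intros Hv Hy Hi; destruct (Hy i Hi) as (Hy0 & Hyc & Hyd).
  set (yi := fun s => y s i) in Hyc.
  set (w := fun s => kernel s * v (clamp 0 T s) i).
  assert (Hw : forall s, continuous w s).
  { intros s; apply continuous_Rmult; [apply kernel_continuous|].
    apply (cont_on_clamp (fun t => v t i)); [lra | now apply Hv]. }
  set (h := fun t => exp (Theta t - Theta T) * (yi t - xT i) - RInt w 0 t).
  assert (Hh : h T = h 0).
  { apply cont_on_derive_0; [lra | |].
    - apply cont_on_minus; [apply cont_on_mult; [|apply cont_on_minus]|];
        auto; apply continuous_cont_on; intros t _.
      + apply exp_Theta_continuous.
      + apply continuous_const.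
      + apply (ex_derive_continuous (fun u => RInt w 0 u)).
        eexists; now apply RInt_upper_derive.
    - intros t Ht.
      assert (Hyt : is_derive yi t (theta t * (xT i - y t i) + gfun lam theta t * v t i))
        by now apply Hyd.
      unfold h; auto_derive.
      + repeat split; [apply ex_derive_Theta | eexists; exact Hyt
                      | apply (ex_RInt_continuous (V := R_CompleteNormedModule)); auto
                      | apply filter_forall; intros s; apply continuity_pt_filterlim, Hw].
      + rewrite Derive_Theta. erewrite (is_derive_unique (fun x => yi x)) by exact Hyt.
        unfold yi, w, kernel, gfun, theta_ext; rewrite clamp_id by lra; ring_R. }
  unfold h, yi in Hh.
  rewrite Rminus_diag, exp_0, Theta_0, Hy0, (RInt_point (V := R_CompleteNormedModule)) in Hh.
  unfold free_gap, response.
  rewrite <- (RInt_ext w) by (intros t Ht; rewrite Rmin_left, Rmax_right in Ht by lra;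
                              unfold w; now rewrite clamp_id by lra).
  replace (0 - Theta T) with (- Theta T) in Hh by ring.
  change (@zero R_CompleteNormedModule) with 0 in Hh. lra.
Qed.

Lemma cost_eq_lsum (v y : R -> vec) :
  admissible d T v -> is_state d T lam theta x0 xT v y ->
  cost d T gam xT v y
  = lsum (seq 0 d) (fun i => / 2 * energy v i + gam / 2 * (free_gap i + response v i) ^ 2).
Proof.
  intros Hv Hy; rewrite lsum_plus, !lsum_scal; unfold cost; f_equal.
  - apply is_RInt_unique, (is_RInt_scal (V := R_NormedModule) (fun t => sqnorm d (v t))).
    apply (is_RInt_lsum (seq 0 d) (fun i s => v s i ^ 2)); intros i Hi; apply in_seq in Hi.
    apply ex_RInt_cont_on; [lra|]. apply cont_on_pow2, Hv; lia.
  - f_equal; apply lsum_ext; intros i Hi; apply in_seq in Hi.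
    unfold vsub; rewrite (terminal_gap v y) by (auto; lia); reflexivity.
Qed.

Lemma cost_lower_bound (v y : R -> vec) :
  admissible d T v -> is_state d T lam theta x0 xT v y ->
  lsum (seq 0 d) (fun i => gam / 2 * opt_gap i ^ 2 * (1 + gam * Kint)
                           + gam / 2 * (response v i + gam * opt_gap i * Kint) ^ 2)
  <= cost d T gam xT v y.
Proof.
  intros Hv Hy; rewrite (cost_eq_lsum v y Hv Hy); apply lsum_le; intros i Hi; apply in_seq in Hi.
  assert (Hq := RInt_quadratic_ge0 (fun s => v s i) kernel 0 T (gam * opt_gap i)).
  fold (energy v i) (response v i) Kint in Hq.
  rewrite opt_gap_spec.
  enough (0 <= energy v i + 2 * (gam * opt_gap i) * response v i + (gam * opt_gap i) ^ 2 * Kint) by nra.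
  apply Hq; [lra | apply Hv; lia | apply continuous_cont_on; intros; apply kernel_continuous].
Qed.

Lemma uopt_continuous (i : nat) (t : R) : continuous (fun s => uopt s i) t.
Proof. apply continuous_Rmult; [apply continuous_const | apply kernel_continuous]. Qed.

Lemma uopt_admissible : admissible d T uopt.
Proof. intros i _; apply continuous_cont_on; intros; apply uopt_continuous. Qed.

Lemma xopt_derive (i : nat) (t : R) :
  is_derive (fun s => xopt s i) t
    (theta_ext t * (xT i - xopt t i) + gfun lam theta_ext t * uopt t i).
Proof.
  unfold xopt; set (w := fun s => kernel s * uopt s i).
  assert (Hw : forall s, continuous w s).
  { intros s; apply continuous_Rmult; [apply kernel_continuous | apply uopt_continuous]. }
  auto_derive.
  - repeat split; [apply ex_derive_Theta | apply ex_derive_Theta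
                  | apply (ex_RInt_continuous (V := R_CompleteNormedModule)); auto
                  | apply filter_forall; intros s; apply continuity_pt_filterlim, Hw].
  - rewrite Derive_Theta; unfold w, kernel; unfold Rminus; rewrite !exp_plus, !exp_Ropp.
    match goal with |- ?a = ?b => change (@eq R a b) end.
    field; split; apply Rgt_not_eq, exp_pos.
Qed.

Lemma xopt_is_state : is_state d T lam theta x0 xT uopt xopt.
Proof.
  intros i _; split; [|split].
  - unfold xopt; rewrite Theta_0, (RInt_point (V := R_CompleteNormedModule)).
    change (@zero R_CompleteNormedModule) with 0; rewrite Ropp_0, exp_0; ring.
  - apply continuous_cont_on; intros t _.
    apply (ex_derive_continuous (fun s => xopt s i)); eexists; apply xopt_derive.
  - intros t Ht; unfold gfun; rewrite <- theta_ext_id by lra; apply xopt_derive.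
Qed.

Lemma RInt_kernel_sq_scal (c : R) : RInt (fun s => c * kernel s ^ 2) 0 T = c * Kint.
Proof.
  apply (RInt_scal (V := R_CompleteNormedModule) (fun s => kernel s ^ 2)).
  apply ex_RInt_cont_on; [lra|].
  apply cont_on_pow2, continuous_cont_on; intros; apply kernel_continuous.
Qed.

Lemma energy_uopt (i : nat) : energy uopt i = (gam * opt_gap i) ^ 2 * Kint.
Proof.
  rewrite <- RInt_kernel_sq_scal; unfold energy, uopt.
  apply RInt_ext; intros; ring_R.
Qed.

Lemma response_uopt (i : nat) : response uopt i = - (gam * opt_gap i) * Kint.
Proof.
  rewrite <- RInt_kernel_sq_scal; unfold response, uopt.
  apply RInt_ext; intros; ring_R.
Qed.

Lemma cost_opt :
  cost d T gam xT uopt xopt = lsum (seq 0 d) (fun i => gam / 2 * opt_gap i ^ 2 * (1 + gam * Kint)).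
Proof.
  rewrite (cost_eq_lsum uopt xopt uopt_admissible xopt_is_state).
  apply lsum_ext; intros i _.
  rewrite energy_uopt, response_uopt, opt_gap_spec; field.
Qed.

Lemma uopt_optimal : optimal d T lam gam theta x0 xT uopt xopt.
Proof.
  split; [exact uopt_admissible | split; [exact xopt_is_state |]].
  intros v y Hv Hy; rewrite cost_opt.
  eapply Rle_trans; [|exact (cost_lower_bound v y Hv Hy)].
  apply lsum_le; intros i _.
  generalize (pow2_ge_0 (response v i + gam * opt_gap i * Kint)); nra.
Qed.

Lemma optimal_terminal_gap (u x : R -> vec) (i : nat) :
  optimal d T lam gam theta x0 xT u x -> (i < d)%nat -> x T i - xT i = opt_gap i.
Proof.
  intros (Hu & Hx & Hopt) Hi.
  assert (Hle := Rle_trans _ _ _ (cost_lower_bound u x Hu Hx)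
                   (Hopt _ _ uopt_admissible xopt_is_state)).
  rewrite cost_opt, lsum_plus in Hle.
  assert (Hres : gam / 2 * (response u i + gam * opt_gap i * Kint) ^ 2 = 0).
  { apply (lsum_ge0_eq0 (seq 0 d) (fun i => gam / 2 * (response u i + gam * opt_gap i * Kint) ^ 2));
      [| lra | apply in_seq; lia].
    intros j _; generalize (pow2_ge_0 (response u j + gam * opt_gap j * Kint)); nra. }
  assert (Hresp : response u i = - (gam * opt_gap i * Kint)).
  { apply Rmult_integral in Hres as [Hg | Hsq]; [lra | nra]. }
  rewrite (terminal_gap u x i Hu Hx Hi), opt_gap_spec, Hresp; ring.
Qed.

End BridgeControl.

Theorem proposition4p5 (d : nat) (T lam gam : R) (theta : R -> R) (x0 xT : vec) :
  0 < T -> 0 < lam -> 0 < gam ->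
  (forall t, 0 <= t <= T -> 0 < theta t) ->
  cont_on theta 0 T ->
  let thb := RInt theta 0 T in
  (exists u x, optimal d T lam gam theta x0 xT u x) /\
  (forall u x, optimal d T lam gam theta x0 xT u x ->
     sqnorm d (vsub (x T) xT) =
       exp (-2 * thb) / (1 + gam * lam ^ 2 * (1 - exp (-2 * thb))) ^ 2
       * sqnorm d (vsub xT x0)).
Proof.
  (* Only λ² enters. *)
  intros HT _ Hgam Hpos Hcont thb.
  split; [eexists; eexists; now apply uopt_optimal |].
  intros u x Hopt.
  unfold sqnorm; fold (lsum (seq 0 d) (fun i => vsub (x T) xT i ^ 2))
                       (lsum (seq 0 d) (fun i => vsub xT x0 i ^ 2)).
  rewrite <- lsum_scal; apply lsum_ext; intros i Hi; apply in_seq in Hi.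
  unfold vsub; rewrite (optimal_terminal_gap T lam gam theta x0 xT d HT Hgam Hcont u x i Hopt)
    by lia.
  assert (HK := Kint_ge0 T lam theta HT Hcont).
  unfold opt_gap, free_gap; rewrite Kint_eq, Theta_T in HK |- * by assumption; fold thb in HK |- *.
  set (K := lam ^ 2 * (1 - exp (-2 * thb))) in HK |- *.
  replace (gam * lam ^ 2 * (1 - exp (-2 * thb))) with (gam * K) by (unfold K; ring).
  replace (-2 * thb) with (- thb + - thb) by ring; rewrite exp_plus.
  field; nra.
Qed.
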